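(* Let $x \in \mathbb{C}$ be close to $0$, and let $p,q$ be the operators acting on functions (power series) $f$ of the variable $z$ defined by $$p(f) = \Big[1 - \mu z - \frac{\mu}{z}\Big] f + \Big(\frac{\mu}{z} - 5\delta\Big) f_{|z=0}, \qquad q(f) = -\sqrt{2}\,\delta\, \partial_z f_{|z=0},$$ where $\mu=\mu(x)$ and $\delta=\delta(x)$ are as in the context. For $(\alpha,\beta) \in \mathbb{C}^2$, the system $$\begin{cases} p(f) - q(g) = \alpha, \\ -q(f) + p(g) = \beta \end{cases}$$ admits a unique solution $(f,g) = \left( \sum_{n=0}^\infty f_n z^n, \sum_{n=0}^\infty g_n z^n \right)$ holomorphic in $|z| < 1$, and this solution is given by $$f = \frac{a\,z_-(\mu)}{\mu} \, \frac{1}{1 - z z_-(\mu)}, \qquad g = \frac{b\,z_-(\mu)}{\mu} \, \frac{1}{1-z z_-(\mu)},$$ where the couple $(a,b)\in \mathbb{C}^2$ is the solution of $$\begin{bmatrix} 1 - 5 \delta \frac{z_-}{\mu} & \sqrt{2}\, \delta \frac{z_-^2}{\mu} \\ \sqrt{2}\, \delta \frac{z_-^2}{\mu} & 1 - 5 \delta\frac{ z_-}{\mu} \end{bmatrix} \begin{bmatrix} a \\ b \end{bmatrix} = \begin{bmatrix} \alpha \\ \beta \end{bmatrix}, \qquad z_- = z_-(\mu).$$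
   Context: Let $r = \frac{\sqrt{2}}{3}$, and for $x$ in the complex disc $\{|x|<r\}$ set $\mu = \mu(x) = \frac{2x}{1 + \frac{x^2}{r^2}}$ and $\delta = \delta(x) = \frac{x^2}{1 + \frac{x^2}{r^2}} = \frac{x}{2}\mu$. Let $U = \mathbb{C} \setminus \{\mu \in \mathbb{C} : \mu^2 \in [\frac14, +\infty[\}$, and for $\mu \in U$ define the holomorphic function $z_-(\mu) = \frac{1}{2\mu}\big[1 - \sqrt{1-4\mu^2}\big]$, with the principal determination of the square root on $U$; it satisfies $z_-(0)=0$, $z_-'(0)=1$, $z_-^2 - \frac{z_-}{\mu} + 1 = 0$, and $|z_-(\mu)|<1$ on $U$. At $\mu=0$ (i.e. $x=0$) the quotient $\frac{z_-(\mu)}{\mu}$ is understood as its limit value $1$; in that case $\delta=0$, $p=\mathrm{Id}$ and $q=0$. *)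

From Stdlib Require Import Reals.
From Coquelicot Require Import Coquelicot.
Open Scope C_scope.

Definition r_const : R := (sqrt 2 / 3)%R.

Definition mu (x : C) : C := 2 * x / (1 + x ^ 2 / RtoC (r_const ^ 2)).
Definition delta (x : C) : C := x ^ 2 / (1 + x ^ 2 / RtoC (r_const ^ 2)).

(** Principal determination of the square root on C
    (real part >= 0; on the negative real axis the value i*sqrt|w|). *)
Definition Csqrt (w : C) : C :=
  let u := Re w in let v := Im w in let m := Cmod w in
  (sqrt ((m + u) / 2),
   if Rlt_dec v 0 then (- sqrt ((m - u) / 2))%R else sqrt ((m - u) / 2)).

Definition zminus (m : C) : C :=
  if Ceq_dec m 0 then 0 else (1 - Csqrt (1 - 4 * m ^ 2)) / (2 * m).

Definition zm_over_mu (m : C) : C :=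
  if Ceq_dec m 0 then 1 else zminus m / m.

(** A function holomorphic in |z| < 1 is represented by its Taylor
    coefficients F, with f(z) = sum_n F n z^n converging for |z| < 1. *)
Definition holo_disc (F : nat -> C) : Prop :=
  forall z : C, Cmod z < 1 -> ex_series (fun n => F n * z ^ n).

Definition psum_is (F : nat -> C) (z s : C) : Prop :=
  is_series (fun n => F n * z ^ n) s.

(** p(f)(z) = [1 - mu z - mu/z] f(z) + (mu/z - 5 delta) f(0),
    evaluated at z <> 0, where fz = f(z) and f(0) = F 0. *)
Definition p_op (x : C) (F : nat -> C) (z fz : C) : C :=
  (1 - mu x * z - mu x / z) * fz + (mu x / z - 5 * delta x) * F 0%nat.

(** q(f) = - sqrt 2 * delta * (d/dz f)(0), and (d/dz f)(0) = F 1. *)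
Definition q_op (x : C) (F : nat -> C) : C :=
  - RtoC (sqrt 2) * delta x * F 1%nat.

(** The system p(f) - q(g) = alpha, -q(f) + p(g) = beta on |z| < 1
    (checked at z <> 0; at z = 0 it follows by continuity). *)
Definition solves_system (x alpha beta : C) (F G : nat -> C) : Prop :=
  forall z fz gz : C, (0 < Cmod z)%R -> Cmod z < 1 ->
    psum_is F z fz -> psum_is G z gz ->
    p_op x F z fz - q_op x G = alpha /\ - q_op x F + p_op x G z gz = beta.

Definition solves_ab (x alpha beta a b : C) : Prop :=
  let zq := zm_over_mu (mu x) in
  let zm := zminus (mu x) in
  let d := 1 - 5 * delta x * zq in
  let o := RtoC (sqrt 2) * delta x * (zm * zq) in
  d * a + o * b = alpha /\ o * a + d * b = beta.

(* Coefficientwise, [p(f) - q(g) = alpha] says that [f_(n+1) = mu (f_n + f_(n+2))] for all [n],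
   plus one boundary relation between [f_0], [f_1] and [g_1]; the identity theorem for power series
   on ]0,1[ extracts these relations.  Since [mu (1 + z_-^2) = z_-], the characteristic roots of the
   recurrence are [z_-] and [1/z_-], and holomorphy in the unit disc rules out [1/z_-]: hence
   [f_n = f_0 z_-^n], i.e. [f = f_0 / (1 - z z_-)], and likewise for [g].  On such geometric series [p]
   acts as multiplication by [mu/z_- = 1/(1 + z_-^2)], up to the [f(0)] term, so the boundary relations
   become the 2x2 system for [(a, b) = (f_0, g_0) mu/z_-], which is uniquely solvable because [delta]
   is small.  Everything is done for [|x| < 1/10], where [|mu| <= 1/4], [|z_-| <= 1/2] and
   [|delta| <= 1/50]. *)

From Stdlib Require Import Reals Lra FunctionalExtensionality.
From Coquelicot Require Import Coquelicot.

Section RealIdentity.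
Local Open Scope R_scope.

Lemma pseries_coef0_of_vanishing (u : nat -> R) :
  (forall t, 0 < t < 1 -> is_pseries u t 0) -> u 0%nat = 0.
Proof.
  intros Hu.
  assert (Hrad : Rbar_lt (Rabs 0) (CV_radius u)).
  { apply Rbar_lt_le_trans with (Rabs (/ 2)).
    - rewrite Rabs_R0, Rabs_right by lra. simpl. lra.
    - apply Rbar_not_lt_le. intros Hlt. apply (CV_disk_outside u (/ 2) Hlt).
      apply ex_series_lim_0. eexists. apply is_pseries_R, Hu. lra. }
  assert (Hcont : filterlim (PSeries u) (at_right 0) (locally (u 0%nat))).
  { rewrite <- PSeries_0.
    apply (filterlim_filter_le_1 (F := locally 0)).
    - intros P [d Hd]. exists d. intros t Ht _. exact (Hd t Ht).
    - apply continuity_pt_filterlim, PSeries_continuity, Hrad. }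
  assert (Hzero : filterlim (PSeries u) (at_right 0) (locally 0)).
  { apply filterlim_ext_loc with (fun _ => 0); [| apply filterlim_const].
    exists (mkposreal 1 Rlt_0_1). intros t Ht Ht0.
    symmetry. apply is_pseries_unique, Hu. split; [exact Ht0 |].
    cbn in Ht. unfold AbsRing_ball, abs, minus, plus, opp in Ht. simpl in Ht.
    rewrite Ropp_0, Rplus_0_r, Rabs_right in Ht by lra. exact Ht. }
  exact (filterlim_locally_unique _ _ _ Hcont Hzero).
Qed.

Lemma pseries_coef_of_vanishing (k : nat) (u : nat -> R) :
  (forall t, 0 < t < 1 -> is_pseries u t 0) -> u k = 0.
Proof.
  revert u. induction k as [| k IH]; intros u Hu.
  - exact (pseries_coef0_of_vanishing u Hu).
  - change (PS_decr_1 u k = 0). apply IH. intros t Ht.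
    pose proof (pseries_coef0_of_vanishing u Hu) as Hu0.
    (* The shifted series sums to [(0 - u 0) / t = 0]. *)
    replace 0 with (scal (/ t) (plus 0 (opp (u 0%nat)))).
    + exact (is_pseries_decr_1 u t (/ t) 0 (Rinv_l t ltac:(lra)) (Hu t Ht)).
    + rewrite Hu0. change (/ t * (0 + - 0) = 0). ring.
Qed.

End RealIdentity.

Open Scope C_scope.

Lemma one_sub_neq0 (e : C) : (Cmod e < 1)%R -> 1 - e <> 0.
Proof.
  intros He E. replace e with (RtoC 1) in He by (apply Ceq_minus in E; rewrite <- E; ring).
  rewrite Cmod_1 in He. lra.
Qed.

Lemma is_series_C_ext (a b : nat -> C) (l : C) :
  (forall n, a n = b n) -> is_series a l -> is_series b l.
Proof. exact (is_series_ext a b l). Qed.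

Lemma is_series_C_unique (a : nat -> C) (l l' : C) :
  is_series a l -> is_series a l' -> l = l'.
Proof. exact (filterlim_locally_unique (sum_n a) l l'). Qed.

Lemma is_series_C_lincomb (a b : nat -> C) (u v la lb : C) :
  is_series a la -> is_series b lb ->
  is_series (fun n => u * a n + v * b n) (u * la + v * lb).
Proof.
  intros Ha Hb.
  exact (is_series_plus _ _ _ _ (is_series_scal u a la Ha) (is_series_scal v b lb Hb)).
Qed.

Lemma ex_series_C_lim_0 (a : nat -> C) :
  ex_series a -> is_lim_seq (fun n => Cmod (a n)) 0%R.
Proof.
  intros Ha. apply is_lim_seq_spec. intros eps.
  destruct (Cauchy_ex_series a Ha eps) as [N HN]. exists N. intros n Hn.
  specialize (HN n n Hn Hn). rewrite sum_n_n in HN. change (Cmod (a n) < eps)%R in HN.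
  rewrite Rminus_0_r, Rabs_right by apply Rle_ge, Cmod_ge_0. exact HN.
Qed.

Lemma is_series_C_geom (u : C) : (Cmod u < 1)%R -> is_series (fun n => u ^ n) (/ (1 - u)).
Proof.
  intros Hu.
  destruct (ex_series_le (fun n => u ^ n) (fun n => Cmod u ^ n)%R) as [s Hs].
  { intros n. change (Cmod (u ^ n) <= Cmod u ^ n)%R. rewrite Cmod_pow. lra. }
  { apply ex_series_geom. rewrite Rabs_right by apply Rle_ge, Cmod_ge_0. exact Hu. }
  change C in s.
  assert (Hshift : s - 1 = u * s).
  { apply (is_series_C_unique (fun n => u ^ S n)).
    - apply is_series_incr_1. change (is_series (fun n => u ^ n) (s - 1 + 1)).
      replace (s - 1 + 1) with s by ring. exact Hs.
    - exact (is_series_scal u _ _ Hs). }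
  replace (/ (1 - u)) with s; [exact Hs |].
  pose proof (one_sub_neq0 u Hu).
  replace s with ((1 - u) * s / (1 - u)) by (field; auto).
  replace ((1 - u) * s) with (s - u * s) by ring. rewrite <- Hshift.
  field. auto.
Qed.

Lemma is_series_Re (a : nat -> C) (l : C) : is_series a l -> is_series (fun n => Re (a n)) (Re l).
Proof.
  intros Ha. apply filterlim_ext with (fun n => Re (sum_n a n)).
  - intros n. induction n as [| n IH]; [now rewrite !sum_O | now rewrite !sum_Sn, <- IH].
  - apply filterlim_comp with (1 := Ha). intros P [eps HP]. exists eps. intros y [Hy _]. exact (HP _ Hy).
Qed.

Lemma is_series_Im (a : nat -> C) (l : C) : is_series a l -> is_series (fun n => Im (a n)) (Im l).
Proof.
  intros Ha. apply filterlim_ext with (fun n => Im (sum_n a n)).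
  - intros n. induction n as [| n IH]; [now rewrite !sum_O | now rewrite !sum_Sn, <- IH].
  - apply filterlim_comp with (1 := Ha). intros P [eps HP]. exists eps. intros y [_ Hy]. exact (HP _ Hy).
Qed.

Lemma Cseries_coef_of_vanishing (c : nat -> C) :
  (forall t : R, (0 < t < 1)%R -> is_series (fun n => c n * RtoC t ^ n) (0 : C)) -> forall n, c n = 0.
Proof.
  intros Hc n.
  assert (HRe : Re (c n) = 0%R).
  { apply (pseries_coef_of_vanishing n (fun k => Re (c k))). intros t Ht. apply is_pseries_R.
    eapply is_series_ext; [| exact (is_series_Re _ _ (Hc t Ht))].
    intros k. cbv beta. rewrite <- RtoC_pow. destruct (c k). simpl. ring. }
  assert (HIm : Im (c n) = 0%R).
  { apply (pseries_coef_of_vanishing n (fun k => Im (c k))). intros t Ht. apply is_pseries_R.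
    eapply is_series_ext; [| exact (is_series_Im _ _ (Hc t Ht))].
    intros k. cbv beta. rewrite <- RtoC_pow. destruct (c k). simpl. ring. }
  destruct (c n). simpl in HRe, HIm. now subst.
Qed.

Lemma psum_incr_1 (F : nat -> C) (z s : C) :
  psum_is F z s -> psum_is (PS_incr_1 F) z (z * s).
Proof.
  intros Hs. apply is_series_decr_1.
  change (is_series (fun k => F k * (z * z ^ k)) (z * s - 0 * 1)).
  replace (z * s - 0 * 1) with (z * s) by ring.
  eapply is_series_ext; [| exact (is_series_scal z _ _ Hs)].
  intros k. change (z * (F k * z ^ k) = F k * (z * z ^ k)). ring.
Qed.

Lemma psum_decr_1 (F : nat -> C) (z s : C) :
  z <> 0 -> psum_is F z s -> psum_is (fun n => F (S n)) z ((s - F 0%nat) / z).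
Proof.
  intros Hz Hs.
  assert (Htail : is_series (fun k => F (S k) * z ^ S k) (s - F 0%nat)).
  { apply (is_series_incr_1 (fun n => F n * z ^ n)).
    change (is_series (fun n => F n * z ^ n) (s - F 0%nat + F 0%nat * 1)).
    replace (s - F 0%nat + F 0%nat * 1) with s by ring. exact Hs. }
  unfold psum_is. replace ((s - F 0%nat) / z) with (/ z * (s - F 0%nat)) by (field; exact Hz).
  eapply is_series_ext; [| exact (is_series_scal (/ z) _ _ Htail)].
  intros k. change (/ z * (F (S k) * (z * z ^ k)) = F (S k) * z ^ k). field. exact Hz.
Qed.

Definition geom_seq (c w : C) (n : nat) : C := c * w ^ n.

Lemma psum_geom_seq (c w z : C) :
  (Cmod z < 1)%R -> (Cmod w <= 1)%R -> psum_is (geom_seq c w) z (c / (1 - z * w)).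
Proof.
  intros Hz Hw.
  assert (Hzw : (Cmod (z * w) < 1)%R).
  { rewrite Cmod_mult. pose proof (Cmod_ge_0 z). pose proof (Cmod_ge_0 w). nra. }
  eapply is_series_ext; [| exact (is_series_scal c _ _ (is_series_C_geom _ Hzw))].
  intros n. change (c * (z * w) ^ n = c * w ^ n * z ^ n). rewrite Cpow_mult_l. ring.
Qed.

Lemma holo_disc_geom_seq (c w : C) : (Cmod w <= 1)%R -> holo_disc (geom_seq c w).
Proof. intros Hw z Hz. eexists. exact (psum_geom_seq c w z Hz Hw). Qed.

Lemma holo_disc_decay (F : nat -> C) (t : R) :
  holo_disc F -> (0 <= t < 1)%R -> is_lim_seq (fun n => Cmod (F n) * t ^ n)%R 0%R.
Proof.
  intros HF Ht.
  assert (Hmod : Cmod (RtoC t) = t) by (rewrite Cmod_R; apply Rabs_right; lra).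
  apply is_lim_seq_ext with (fun n => Cmod (F n * RtoC t ^ n)).
  - intros n. rewrite Cmod_mult, Cmod_pow, Hmod. reflexivity.
  - apply ex_series_C_lim_0, HF. rewrite Hmod. lra.
Qed.

Section GeometricRecurrence.
Variables (w : C) (t : R).
Hypotheses (Ht : (0 < t)%R) (Hw : (Cmod w <= t)%R).

(* [E n := F (S n) - w * F n] satisfies [E 0 = w ^ n * E n], and [t ^ n * |E n|] tends to [0]. *)
Lemma recurrence_first_step (F : nat -> C) :
  is_lim_seq (fun n => Cmod (F n) * t ^ n)%R 0%R ->
  (forall n, (1 + w ^ 2) * F (S n) = w * (F n + F (S (S n)))) ->
  F 1%nat = w * F 0%nat.
Proof.
  intros Hdecay Hrec.
  set (E n := F (S n) - w * F n).
  assert (HE : forall n, E 0%nat = w ^ n * E n).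
  { induction n as [| n IH]; [simpl; ring |].
    rewrite IH. unfold E. simpl.
    pose proof (proj1 (Ceq_minus _ _) (Hrec n)) as Hn. apply Ceq_minus.
    transitivity (w ^ n * ((1 + w ^ 2) * F (S n) - w * (F n + F (S (S n))))); [ring |].
    rewrite Hn. ring. }
  set (u n := (Cmod (F n) * t ^ n)%R).
  assert (Hbound : forall n, (Cmod (E 0%nat) <= u (S n) / t + t * u n)%R).
  { intros n. rewrite (HE n), Cmod_mult, Cmod_pow.
    assert (HEn : (Cmod (E n) <= Cmod (F (S n)) + Cmod w * Cmod (F n))%R).
    { unfold E. replace (Cmod w * Cmod (F n))%R with (Cmod (- (w * F n)))
        by (rewrite Cmod_opp; apply Cmod_mult).
      apply Cmod_triangle. }
    assert (Hpow : (Cmod w ^ n <= t ^ n)%R) by (apply pow_incr; split; [apply Cmod_ge_0 | exact Hw]).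
    assert (Hpow0 : (0 <= Cmod w ^ n)%R) by (apply pow_le, Cmod_ge_0).
    pose proof (Cmod_ge_0 w). pose proof (Cmod_ge_0 (F n)). pose proof (Cmod_ge_0 (F (S n))).
    replace (u (S n) / t + t * u n)%R with (t ^ n * (Cmod (F (S n)) + t * Cmod (F n)))%R
      by (unfold u; simpl; field; lra).
    apply Rle_trans with (Cmod w ^ n * (Cmod (F (S n)) + Cmod w * Cmod (F n)))%R;
      [apply Rmult_le_compat_l; assumption |].
    apply Rmult_le_compat; nra. }
  assert (Hlim : is_lim_seq (fun n => u (S n) / t + t * u n)%R 0%R).
  { replace 0%R with (0 / t + t * 0)%R by (field; lra).
    apply is_lim_seq_plus'.
    - apply is_lim_seq_mult'; [apply (is_lim_seq_incr_1 u), Hdecay | apply is_lim_seq_const].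
    - apply is_lim_seq_mult'; [apply is_lim_seq_const | exact Hdecay]. }
  pose proof (is_lim_seq_le _ _ _ _ Hbound (is_lim_seq_const _) Hlim) as Hle. simpl in Hle.
  apply Ceq_minus, Cmod_eq_0. pose proof (Cmod_ge_0 (E 0%nat)). unfold E in *. lra.
Qed.

Lemma recurrence_geometric (F : nat -> C) :
  is_lim_seq (fun n => Cmod (F n) * t ^ n)%R 0%R ->
  (forall n, (1 + w ^ 2) * F (S n) = w * (F n + F (S (S n)))) ->
  forall n, F n = F 0%nat * w ^ n.
Proof.
  intros Hdecay Hrec n. revert F Hdecay Hrec. induction n as [| n IH]; intros F Hdecay Hrec.
  - simpl. ring.
  - rewrite (IH (fun k => F (S k))), (recurrence_first_step F Hdecay Hrec); [simpl; ring | | easy].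
    apply is_lim_seq_ext with (fun k => Cmod (F (S k)) * t ^ S k * / t)%R.
    + intros k. simpl. field. lra.
    + replace 0%R with (0 * / t)%R by ring.
      apply is_lim_seq_mult'; [apply (is_lim_seq_incr_1 (fun k => Cmod (F k) * t ^ k)%R), Hdecay |].
      apply is_lim_seq_const.
Qed.

End GeometricRecurrence.

Lemma Csqrt_mul_self (u : C) : Csqrt u * Csqrt u = u.
Proof.
  destruct u as [a b]. unfold Csqrt, Re, Im; simpl fst; simpl snd.
  set (M := Cmod (a, b)).
  assert (HM2 : (M * M = a * a + b * b)%R).
  { pose proof (Cmod2_alt (a, b)) as H. unfold M. simpl in H |- *. nra. }
  assert (HMa : (Rabs a <= M)%R) by exact (re_le_Cmod (a, b)).
  pose proof (Rle_abs a). pose proof (Rle_abs (- a)). rewrite Rabs_Ropp in *.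
  set (P := sqrt ((M + a) / 2)). set (Q := sqrt ((M - a) / 2)).
  assert (HP : (P * P = (M + a) / 2)%R) by (apply sqrt_sqrt; lra).
  assert (HQ : (Q * Q = (M - a) / 2)%R) by (apply sqrt_sqrt; lra).
  (* [2PQ = sqrt (M^2 - a^2) = |b|]; the sign of [Im] restores [b]. *)
  assert (HPQ : (2 * P * Q = Rabs b)%R).
  { assert (0 <= P)%R by apply sqrt_pos. assert (0 <= Q)%R by apply sqrt_pos.
    rewrite <- (sqrt_Rsqr (2 * P * Q)) by nra. rewrite <- sqrt_Rsqr_abs. f_equal.
    unfold Rsqr. replace (2 * P * Q * (2 * P * Q))%R with (4 * (P * P) * (Q * Q))%R by ring.
    rewrite HP, HQ. nra. }
  unfold Cmult; simpl.
  destruct (Rlt_dec b 0) as [Hb | Hb];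
    [rewrite Rabs_left in HPQ by exact Hb | rewrite Rabs_right in HPQ by lra];
    f_equal; nra.
Qed.

Lemma Cmod_one_add_Csqrt (u : C) : (1 <= Cmod (1 + Csqrt u))%R.
Proof.
  eapply Rle_trans; [| apply re_le_Cmod]. simpl.
  assert (0 <= sqrt ((Cmod u + Re u) / 2))%R by apply sqrt_pos.
  rewrite Rabs_right; lra.
Qed.

Lemma zminus_alt (m : C) :
  m <> 0 -> zminus m = 2 * m / (1 + Csqrt (1 - 4 * m ^ 2)).
Proof.
  intros Hm. unfold zminus. destruct (Ceq_dec m 0) as [E | _]; [contradiction |].
  set (s := Csqrt (1 - 4 * m ^ 2)).
  assert (Hs : s * s = 1 - 4 * m ^ 2) by apply Csqrt_mul_self.
  assert (Hs1 : 1 + s <> 0).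
  { intros E. pose proof (Cmod_one_add_Csqrt (1 - 4 * m ^ 2)) as H.
    fold s in H. rewrite E, Cmod_0 in H. lra. }
  assert (H2 : (2 : C) <> 0) by (intros E; apply RtoC_inj in E; lra).
  apply Ceq_minus.
  transitivity ((1 - s * s - 4 * m ^ 2) / (2 * m * (1 + s))); [field; auto |].
  rewrite Hs. field. auto.
Qed.

Lemma Cmod_zminus_le (m : C) : (Cmod (zminus m) <= 2 * Cmod m)%R.
Proof.
  destruct (Ceq_dec m 0) as [-> | Hm].
  - unfold zminus. destruct (Ceq_dec 0 0); [| contradiction]. rewrite Cmod_0. lra.
  - rewrite zminus_alt by exact Hm.
    pose proof (Cmod_one_add_Csqrt (1 - 4 * m ^ 2)) as H.
    assert (H0 : 1 + Csqrt (1 - 4 * m ^ 2) <> 0).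
    { intros E. rewrite E, Cmod_0 in H. lra. }
    rewrite Cmod_div, Cmod_mult, Cmod_R, Rabs_right by (auto; lra).
    pose proof (Cmod_ge_0 m).
    apply Rmult_le_reg_r with (Cmod (1 + Csqrt (1 - 4 * m ^ 2))); [lra |].
    unfold Rdiv. rewrite Rmult_assoc, Rinv_l by lra. nra.
Qed.

Lemma zm_over_mu_eq (m : C) : zm_over_mu m = 1 + zminus m ^ 2.
Proof.
  unfold zm_over_mu, zminus. destruct (Ceq_dec m 0) as [_ | Hm]; [ring |].
  set (s := Csqrt (1 - 4 * m ^ 2)).
  assert (Hs : s * s = 1 - 4 * m ^ 2) by apply Csqrt_mul_self.
  assert (H2 : (2 : C) <> 0) by (intros E; apply RtoC_inj in E; lra).
  apply Ceq_minus.
  transitivity ((1 - 4 * m ^ 2 - s * s) / (4 * m ^ 2)); [field; auto |].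
  rewrite Hs. field. auto.
Qed.

Lemma mul_zm_over_mu (m : C) : m * zm_over_mu m = zminus m.
Proof.
  unfold zm_over_mu. destruct (Ceq_dec m 0) as [-> | Hm].
  - unfold zminus. destruct (Ceq_dec 0 0); [ring | contradiction].
  - field. exact Hm.
Qed.

Lemma zm_over_mu_mul_one_sub (m : C) : zm_over_mu m * (1 - m * zminus m) = 1.
Proof.
  transitivity (zm_over_mu m - (m * zm_over_mu m) * zminus m); [ring |].
  rewrite mul_zm_over_mu, zm_over_mu_eq. ring.
Qed.

Lemma zm_over_mu_neq0 (m : C) : zm_over_mu m <> 0.
Proof.
  intros E. pose proof (zm_over_mu_mul_one_sub m) as H. rewrite E, Cmult_0_l in H.
  apply RtoC_inj in H. lra.
Qed.

Lemma Cinv_zm_over_mu (m : C) : / zm_over_mu m = 1 - m * zminus m.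
Proof.
  pose proof (zm_over_mu_neq0 m) as Hq.
  replace (1 - m * zminus m) with (/ zm_over_mu m * (zm_over_mu m * (1 - m * zminus m)))
    by (field; exact Hq).
  rewrite zm_over_mu_mul_one_sub. symmetry. apply Cmult_1_r.
Qed.

(* On geometric series [p] is multiplication by the constant [/ zm_over_mu m], up to the [f(0)] term. *)
Lemma p_symbol_geometric (m z : C) :
  z <> 0 -> 1 - z * zminus m <> 0 ->
  zm_over_mu m * ((1 - m * z - m / z) / (1 - z * zminus m) + m / z) = 1.
Proof.
  intros Hz Hzw.
  pose proof (mul_zm_over_mu m) as Hm. pose proof (zm_over_mu_neq0 m) as Hq.
  rewrite zm_over_mu_eq in Hm, Hq |- *.
  set (w := zminus m) in *. clearbody w.
  assert (Em : m = m * (1 + w ^ 2) / (1 + w ^ 2)) by (field; exact Hq).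
  rewrite Hm in Em. rewrite Em. field. auto.
Qed.

Lemma r_const_sq : (r_const ^ 2 = 2 / 9)%R.
Proof.
  unfold r_const, Rdiv. rewrite Rpow_mult_distr, pow2_sqrt by lra. field.
Qed.

Lemma mu_delta_small (x : C) :
  (Cmod x < / 10)%R -> (Cmod (mu x) <= / 4)%R /\ (Cmod (delta x) <= / 50)%R.
Proof.
  intros Hx. pose proof (Cmod_ge_0 x) as Hx0.
  set (D := 1 + x ^ 2 / RtoC (r_const ^ 2)).
  assert (HD : (191 / 200 <= Cmod D)%R).
  { assert (Hq : (Cmod (x ^ 2 / RtoC (r_const ^ 2)) <= 9 / 200)%R).
    { rewrite r_const_sq, Cmod_div, Cmod_pow, Cmod_R, Rabs_right
        by (try (intros E; apply RtoC_inj in E); lra).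
      simpl. nra. }
    pose proof (Cmod_triangle D (- (x ^ 2 / RtoC (r_const ^ 2)))) as H.
    rewrite Cmod_opp in H. unfold D in H at 1.
    replace (1 + x ^ 2 / RtoC (r_const ^ 2) + - (x ^ 2 / RtoC (r_const ^ 2))) with (RtoC 1) in H
      by ring.
    rewrite Cmod_1 in H. lra. }
  assert (HD0 : D <> 0) by (intros E; rewrite E, Cmod_0 in HD; lra).
  unfold mu, delta. fold D.
  rewrite !Cmod_div, Cmod_mult, Cmod_pow, Cmod_R, Rabs_right by (auto; lra).
  split; apply Rmult_le_reg_r with (Cmod D); try lra;
    unfold Rdiv; rewrite Rmult_assoc, Rinv_l by lra; simpl; nra.
Qed.

Lemma p_op_coefficients (x K : C) (F : nat -> C) :
  (forall t : R, (0 < t < 1)%R -> exists fz, psum_is F t fz /\ p_op x F t fz = K) ->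
  (1 - 5 * delta x) * F 0%nat - mu x * F 1%nat = K /\
  forall n, F (S n) = mu x * (F n + F (S (S n))).
Proof.
  intros HK.
  set (c := K + 5 * delta x * F 0%nat).
  (* [h] is the coefficient sequence of [p(f) - K]; [0 ^ n] is the indicator of [n = 0]. *)
  set (h n := F n - mu x * PS_incr_1 F n - mu x * F (S n) - c * 0 ^ n).
  assert (Hh : forall n, h n = 0).
  { apply Cseries_coef_of_vanishing. intros t Ht.
    destruct (HK t Ht) as [fz [Hf Hp]].
    assert (Hz : RtoC t <> 0) by (intros E; apply RtoC_inj in E; lra).
    pose proof (is_series_C_lincomb _ _ 1 (- mu x) _ _ Hf (psum_incr_1 F t fz Hf)) as H1.
    pose proof (is_series_C_lincomb _ _ 1 (- mu x) _ _ H1 (psum_decr_1 F t fz Hz Hf)) as H2.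
    assert (Ht1 : (Cmod t < 1)%R) by (rewrite Cmod_R, Rabs_right; lra).
    assert (H0 : (Cmod 0 <= 1)%R) by (rewrite Cmod_0; lra).
    pose proof (is_series_C_lincomb _ _ 1 (-1) _ _ H2 (psum_geom_seq c 0 t Ht1 H0)) as H3.
    replace (0 : C) with (1 * (1 * (1 * fz + - mu x * (t * fz)) + - mu x * ((fz - F 0%nat) / t))
                          + -1 * (c / (1 - t * 0))).
    - eapply is_series_C_ext; [| exact H3]. intros n. unfold h, geom_seq. simpl. ring.
    - unfold c. rewrite <- Hp. unfold p_op. field. exact Hz. }
  split.
  - pose proof (Hh 0%nat) as H. unfold h in H. change (PS_incr_1 F 0) with (RtoC 0) in H.
    apply Ceq_minus. rewrite <- H. unfold c. simpl. ring.
  - intros n. pose proof (Hh (S n)) as H. unfold h in H. simpl in H.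
    apply Ceq_minus. rewrite <- H. ring.
Qed.

Lemma sym2_solution_unique (p o alpha beta a b a' b' : C) :
  p - o <> 0 -> p + o <> 0 ->
  p * a + o * b = alpha /\ o * a + p * b = beta ->
  p * a' + o * b' = alpha /\ o * a' + p * b' = beta ->
  a = a' /\ b = b'.
Proof.
  intros Hm Hp [E1 E2] [E1' E2'].
  split; apply Ceq_minus.
  - transitivity ((p * (p * a + o * b - (p * a' + o * b')) - o * (o * a + p * b - (o * a' + p * b')))
                  / ((p - o) * (p + o))); [field; auto |].
    rewrite E1, E2, E1', E2'. field; auto.
  - transitivity ((p * (o * a + p * b - (o * a' + p * b')) - o * (p * a + o * b - (p * a' + o * b')))
                  / ((p - o) * (p + o))); [field; auto |].
    rewrite E1, E2, E1', E2'. field; auto.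
Qed.

Lemma sym2_solution_exists_unique (p o alpha beta : C) :
  p - o <> 0 -> p + o <> 0 ->
  exists! ab : C * C, p * fst ab + o * snd ab = alpha /\ o * fst ab + p * snd ab = beta.
Proof.
  intros Hm Hp.
  set (a0 := (p * alpha - o * beta) / ((p - o) * (p + o))).
  set (b0 := (p * beta - o * alpha) / ((p - o) * (p + o))).
  assert (H0 : p * a0 + o * b0 = alpha /\ o * a0 + p * b0 = beta)
    by (unfold a0, b0; split; field; auto).
  exists (a0, b0). split; [exact H0 |].
  intros [a b] Hab. now destruct (sym2_solution_unique p o alpha beta a0 b0 a b Hm Hp H0 Hab) as [-> ->].
Qed.

Lemma Cmod_sqrt2_le : (Cmod (RtoC (sqrt 2)) <= 3 / 2)%R.
Proof.
  rewrite Cmod_R, Rabs_right by apply Rle_ge, sqrt_pos.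
  rewrite <- (sqrt_square (3 / 2)) by lra. apply sqrt_le_1_alt. lra.
Qed.

Section SmallParameters.
Variable x : C.
Hypotheses (Hw : (Cmod (zminus (mu x)) <= / 2)%R) (Hd : (Cmod (delta x) <= / 50)%R).

Local Notation w := (zminus (mu x)).
Local Notation zq := (zm_over_mu (mu x)).

Lemma solves_ab_det_neq0 :
  let p := 1 - 5 * delta x * zq in
  let o := RtoC (sqrt 2) * delta x * (w * zq) in
  p - o <> 0 /\ p + o <> 0.
Proof.
  intros p o.
  assert (Hzq : (Cmod zq <= 5 / 4)%R).
  { rewrite zm_over_mu_eq. eapply Rle_trans; [apply Cmod_triangle |].
    rewrite Cmod_1, Cmod_pow. pose proof (Cmod_ge_0 w). simpl. nra. }
  assert (Hsmall : (Cmod (5 * delta x * zq) + Cmod o < 1)%R).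
  { unfold o. rewrite !Cmod_mult, Cmod_R, Rabs_right by lra.
    pose proof Cmod_sqrt2_le. pose proof (Cmod_ge_0 (delta x)). pose proof (Cmod_ge_0 w).
    pose proof (Cmod_ge_0 zq). pose proof (Cmod_ge_0 (RtoC (sqrt 2))).
    assert (Cmod (delta x) * Cmod zq <= / 50 * (5 / 4))%R by (apply Rmult_le_compat; lra).
    assert (Cmod w * Cmod zq <= / 2 * (5 / 4))%R by (apply Rmult_le_compat; lra).
    assert (Cmod (RtoC (sqrt 2)) * Cmod (delta x) <= 3 / 2 * / 50)%R by (apply Rmult_le_compat; lra).
    assert (Cmod (RtoC (sqrt 2)) * Cmod (delta x) * (Cmod w * Cmod zq)
            <= 3 / 2 * / 50 * (/ 2 * (5 / 4)))%R by (apply Rmult_le_compat; try apply Rmult_le_pos; lra).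
    lra. }
  split.
  - replace (p - o) with (1 - (5 * delta x * zq + o)) by (unfold p; ring).
    apply one_sub_neq0. eapply Rle_lt_trans; [apply Cmod_triangle | exact Hsmall].
  - replace (p + o) with (1 - (5 * delta x * zq + - o)) by (unfold p; ring).
    apply one_sub_neq0. eapply Rle_lt_trans; [apply Cmod_triangle | rewrite Cmod_opp; exact Hsmall].
Qed.

Lemma solves_ab_exists_unique (alpha beta : C) :
  exists! ab : C * C, solves_ab x alpha beta (fst ab) (snd ab).
Proof.
  destruct solves_ab_det_neq0 as [Hm Hp]. exact (sym2_solution_exists_unique _ _ alpha beta Hm Hp).
Qed.

Lemma solves_ab_inj (alpha beta a b a' b' : C) :
  solves_ab x alpha beta a b -> solves_ab x alpha beta a' b' -> a = a' /\ b = b'.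
Proof.
  destruct solves_ab_det_neq0 as [Hm Hp]. exact (sym2_solution_unique _ _ alpha beta _ _ _ _ Hm Hp).
Qed.

Lemma p_op_geom_seq (c z : C) :
  z <> 0 -> (Cmod z < 1)%R ->
  p_op x (geom_seq (c * zq) w) z (c * zq / (1 - z * w)) = (1 - 5 * delta x * zq) * c.
Proof.
  intros Hz Hz1.
  assert (Hzw : 1 - z * w <> 0).
  { apply one_sub_neq0. rewrite Cmod_mult. pose proof (Cmod_ge_0 z). pose proof (Cmod_ge_0 w). nra. }
  pose proof (p_symbol_geometric (mu x) z Hz Hzw) as Hsym.
  unfold p_op, geom_seq. simpl.
  transitivity (c * (zq * ((1 - mu x * z - mu x / z) / (1 - z * w) + mu x / z)) - 5 * delta x * zq * c);
    [field; auto |].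
  rewrite Hsym. ring.
Qed.

Lemma geom_seq_solves_system (alpha beta a b : C) :
  solves_ab x alpha beta a b ->
  solves_system x alpha beta (geom_seq (a * zq) w) (geom_seq (b * zq) w).
Proof.
  intros [E1 E2] z fz gz Hz0 Hz1 Hf Hg.
  assert (Hz : z <> 0) by (apply Cmod_gt_0; exact Hz0).
  assert (Hw1 : (Cmod w <= 1)%R) by lra.
  rewrite (is_series_C_unique _ _ _ Hf (psum_geom_seq _ _ _ Hz1 Hw1)).
  rewrite (is_series_C_unique _ _ _ Hg (psum_geom_seq _ _ _ Hz1 Hw1)).
  rewrite !p_op_geom_seq by assumption.
  unfold q_op, geom_seq. simpl. rewrite <- E1, <- E2. split; ring.
Qed.

Lemma p_op_eq_const_geometric (K : C) (F : nat -> C) :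
  holo_disc F ->
  (forall t : R, (0 < t < 1)%R -> exists fz, psum_is F t fz /\ p_op x F t fz = K) ->
  (forall n, F n = F 0%nat * w ^ n) /\ (1 - 5 * delta x * zq) * (F 0%nat / zq) = K.
Proof.
  intros HF HK.
  destruct (p_op_coefficients x K F HK) as [H0 Hrec].
  assert (Hrec' : forall n, (1 + w ^ 2) * F (S n) = w * (F n + F (S (S n)))).
  { intros n. rewrite (Hrec n), <- zm_over_mu_eq, <- (mul_zm_over_mu (mu x)). ring. }
  assert (Hgeom : forall n, F n = F 0%nat * w ^ n).
  { apply (recurrence_geometric w (/ 2)); [lra | exact Hw | | exact Hrec'].
    apply holo_disc_decay; [exact HF | lra]. }
  split; [exact Hgeom |].
  rewrite <- H0, (Hgeom 1%nat).
  transitivity (F 0%nat * / zq - 5 * delta x * F 0%nat); [field; apply zm_over_mu_neq0 |].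
  rewrite Cinv_zm_over_mu. simpl. ring.
Qed.

Lemma solves_system_geom_seq (alpha beta a b : C) (F G : nat -> C) :
  holo_disc F -> holo_disc G -> solves_system x alpha beta F G -> solves_ab x alpha beta a b ->
  F = geom_seq (a * zq) w /\ G = geom_seq (b * zq) w.
Proof.
  intros HF HG HS Hab.
  assert (Hpsum : forall t : R, (0 < t < 1)%R -> exists fz gz,
             psum_is F t fz /\ psum_is G t gz /\
             p_op x F t fz - q_op x G = alpha /\ - q_op x F + p_op x G t gz = beta).
  { intros t Ht.
    assert (Hmod : Cmod (RtoC t) = t) by (rewrite Cmod_R; apply Rabs_right; lra).
    assert (H0 : (0 < Cmod t)%R) by lra. assert (H1 : (Cmod t < 1)%R) by lra.
    destruct (HF t H1) as [fz Hf]. destruct (HG t H1) as [gz Hg].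
    exists fz, gz. destruct (HS t fz gz H0 H1 Hf Hg). auto. }
  destruct (p_op_eq_const_geometric (alpha + q_op x G) F HF) as [HgF HF0].
  { intros t Ht. destruct (Hpsum t Ht) as (fz & gz & Hf & _ & E & _).
    exists fz. split; [exact Hf | rewrite <- E; ring]. }
  destruct (p_op_eq_const_geometric (beta + q_op x F) G HG) as [HgG HG0].
  { intros t Ht. destruct (Hpsum t Ht) as (fz & gz & _ & Hg & _ & E).
    exists gz. split; [exact Hg | rewrite <- E; ring]. }
  assert (Hab' : solves_ab x alpha beta (F 0%nat / zq) (G 0%nat / zq)).
  { unfold q_op in HF0, HG0. rewrite (HgG 1%nat) in HF0. rewrite (HgF 1%nat) in HG0.
    split; [rewrite HF0 | rewrite HG0]; simpl; field; apply zm_over_mu_neq0. }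
  destruct (solves_ab_inj _ _ _ _ _ _ Hab' Hab) as [Ea Eb].
  split; apply functional_extensionality; intros n; unfold geom_seq;
    [rewrite HgF, <- Ea | rewrite HgG, <- Eb]; field; apply zm_over_mu_neq0.
Qed.

End SmallParameters.

Theorem lemma7 :
  exists eps : R, (0 < eps)%R /\
  forall x : C, Cmod x < r_const -> Cmod x < eps ->
  forall alpha beta : C,
    (exists! ab : C * C, solves_ab x alpha beta (fst ab) (snd ab)) /\
    forall a b : C, solves_ab x alpha beta a b ->
      (exists! FG : (nat -> C) * (nat -> C),
          holo_disc (fst FG) /\ holo_disc (snd FG) /\
          solves_system x alpha beta (fst FG) (snd FG)) /\
      (forall F G : nat -> C,
          holo_disc F -> holo_disc G -> solves_system x alpha beta F G ->
          forall z : C, Cmod z < 1 ->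
            psum_is F z (a * zm_over_mu (mu x) / (1 - z * zminus (mu x))) /\
            psum_is G z (b * zm_over_mu (mu x) / (1 - z * zminus (mu x)))).
Proof.
  exists (/ 10)%R. split; [lra |].
  intros x _ Hx alpha beta.
  destruct (mu_delta_small x Hx) as [Hm Hd].
  assert (Hw : (Cmod (zminus (mu x)) <= / 2)%R) by (pose proof (Cmod_zminus_le (mu x)); lra).
  split; [exact (solves_ab_exists_unique x Hw Hd alpha beta) |].
  intros a b Hab. split.
  - exists (geom_seq (a * zm_over_mu (mu x)) (zminus (mu x)),
            geom_seq (b * zm_over_mu (mu x)) (zminus (mu x))).
    split.
    + split; [| split]; try (apply holo_disc_geom_seq; lra).
      exact (geom_seq_solves_system x Hw alpha beta a b Hab).
    + intros [F G] (HF & HG & HS).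
      now destruct (solves_system_geom_seq x Hw Hd alpha beta a b F G HF HG HS Hab) as [-> ->].
  - intros F G HF HG HS z Hz.
    destruct (solves_system_geom_seq x Hw Hd alpha beta a b F G HF HG HS Hab) as [-> ->].
    split; apply psum_geom_seq; lra.
Qed.
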